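(* Consider the network system of the context with each $v_i$ measurable, and suppose every subcontroller is of the form $u_i=\hat K_iR_i\begin{bmatrix} y_i\\ v_i\end{bmatrix}$ with $R_i:=\begin{bmatrix} I&-G_{y_iv_i}\end{bmatrix}$ and $\hat K_i$ a stabilizing controller for $G_{y_iu_i}$. Then, for any interaction $\boldsymbol L$ such that $\boldsymbol G_{\rm pre}$ is internally stable, the closed-loop map $\boldsymbol T_{\boldsymbol{zd}}:\boldsymbol d\mapsto\boldsymbol z$ of the entire network system satisfies $$\boldsymbol T_{\boldsymbol{zd}}=\mathrm{diag}\big(\hat M_{z_id_i}(\hat K_i)\big)+\boldsymbol G_{\boldsymbol{zv}}(I-\boldsymbol L\boldsymbol G_{\boldsymbol{wv}})^{-1}\boldsymbol L\,\mathrm{diag}\big(\hat M_{w_id_i}(\hat K_i)\big),$$ where $\hat M_{z_id_i}(\hat K_i):=G_{z_id_i}+G_{z_iu_i}\hat K_i(I-G_{y_iu_i}\hat K_i)^{-1}G_{y_id_i}$ and $\hat M_{w_id_i}(\hat K_i):=G_{w_id_i}+G_{w_iu_i}\hat K_i(I-G_{y_iu_i}\hat K_i)^{-1}G_{y_id_i}$.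
   Context: For $i=1,\dots,N$, subsystem $G_i$ is a proper real rational transfer matrix with inputs $(v_i,d_i,u_i)$ (interaction, disturbance, control) and outputs $(w_i,z_i,y_i)$ (interaction, evaluation, measurement), $G_{a_ib_i}$ denoting the block from $b_i$ to $a_i$. Stacked signals $\boldsymbol v=\mathrm{col}(v_1,\dots,v_N)$ etc.; the interaction is $\boldsymbol v=\boldsymbol L\boldsymbol w$ with $\boldsymbol L$ a proper real rational transfer matrix. $\boldsymbol G_{\boldsymbol{wv}}:=\mathrm{diag}(G_{w_iv_i})$, $\boldsymbol G_{\boldsymbol{zv}}:=\mathrm{diag}(G_{z_iv_i})$. The preexisting system $\boldsymbol G_{\rm pre}$ is the loop $\boldsymbol w=\boldsymbol G_{\boldsymbol{wv}}\boldsymbol v$, $\boldsymbol v=\boldsymbol L\boldsymbol w$. All feedback systems are well-posed; internal stability is standard. $\hat K_i$ is a stabilizing controller for $G_{y_iu_i}$ if the positive feedback loop $y_i=G_{y_iu_i}u_i$, $u_i=\hat K_iy_i$ is internally stable. *)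

(* Transfer functions are elements of the field of rational
   functions {fraction {poly C}} over an abstract numClosedFieldType C (the
   complex numbers in the paper); "real rational" = representable with real
   (Num.real) polynomial coefficients. *)
From HB Require Import structures.
From mathcomp Require Import all_boot all_order all_algebra.
Set Implicit Arguments. Unset Strict Implicit. Unset Printing Implicit Defensive.
Import Order.TTheory GRing.Theory Num.Theory.
Local Open Scope ring_scope.

Section TF.
Variable C : numClosedFieldType.
Local Notation TF := {fraction {poly C}}.
Local Notation "x %:F" := (@FracField.tofrac {poly C} x).

Definition real_poly (p : {poly C}) : Prop := forall k, p`_k \is Num.real.

Definition real_rat (f : TF) : Prop :=
  exists n d : {poly C}, [/\ real_poly n, real_poly d, d != 0 &
    f = n%:F / d%:F].

Definition proper_rat (f : TF) : Prop :=
  exists n d : {poly C}, [/\ d != 0, (size n <= size d)%N & f = n%:F / d%:F].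

Definition hurwitz (d : {poly C}) : Prop :=
  d != 0 /\ forall s, root d s -> 'Re s < 0.

Definition stable_rat (f : TF) : Prop :=
  exists n d : {poly C}, [/\ hurwitz d, (size n <= size d)%N & f = n%:F / d%:F].

Definition prr_mx m n (A : 'M[TF]_(m, n)) : Prop :=
  forall i j, proper_rat (A i j) /\ real_rat (A i j).

Definition stable_mx m n (A : 'M[TF]_(m, n)) : Prop :=
  forall i j, stable_rat (A i j).

(* Internal stability of the positive feedback loop  y = P u, u = K y:
   with injected signals r1, r2 (u = K y + r1, y = P u + r2) the loop
   is well-posed (the block matrix is invertible) and all closed-loop maps
   (r1,r2) |-> (u,y) are stable. *)
Definition int_stable m p (P : 'M[TF]_(p, m)) (K : 'M[TF]_(m, p)) : Prop :=
  let A := block_mx 1%:M (- K) (- P) 1%:M : 'M[TF]_(m + p) in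
  A \in unitmx /\ stable_mx (invmx A).

Definition bdiag N (p q : 'I_N -> nat) (B : forall i, 'M[TF]_(p i, q i))
  : 'M[TF]_(\sum_i p i, \sum_i q i) :=
  \mxblock_(j, k) (if j == k then conform_mx 0 (B j) else 0).

Definition blk N (p : 'I_N -> nat) (x : 'cV[TF]_(\sum_i p i)) (i : 'I_N)
  : 'cV[TF]_(p i) := submxcol x i.


Section Network.
Variable N : nat.
Variables (nv nd nu nw nz ny : 'I_N -> nat).
Variables (Gwv : forall i, 'M[TF]_(nw i, nv i)) (Gwd : forall i, 'M[TF]_(nw i, nd i))
          (Gwu : forall i, 'M[TF]_(nw i, nu i)).
Variables (Gzv : forall i, 'M[TF]_(nz i, nv i)) (Gzd : forall i, 'M[TF]_(nz i, nd i))
          (Gzu : forall i, 'M[TF]_(nz i, nu i)).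
Variables (Gyv : forall i, 'M[TF]_(ny i, nv i)) (Gyd : forall i, 'M[TF]_(ny i, nd i))
          (Gyu : forall i, 'M[TF]_(ny i, nu i)).
Variable L : 'M[TF]_(\sum_i nv i, \sum_i nw i).
Variable Khat : forall i, 'M[TF]_(nu i, ny i).

Definition Rmx i : 'M[TF]_(ny i, ny i + nv i) := row_mx 1%:M (- Gyv i).

Definition net_eqs (d : 'cV[TF]_(\sum_i nd i)) (v : 'cV[TF]_(\sum_i nv i))
  (w : 'cV[TF]_(\sum_i nw i)) (u : 'cV[TF]_(\sum_i nu i))
  (y : 'cV[TF]_(\sum_i ny i)) (z : 'cV[TF]_(\sum_i nz i)) : Prop :=
  [/\ forall i, blk w i = Gwv i *m blk v i + Gwd i *m blk d i + Gwu i *m blk u i,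
      forall i, blk z i = Gzv i *m blk v i + Gzd i *m blk d i + Gzu i *m blk u i,
      forall i, blk y i = Gyv i *m blk v i + Gyd i *m blk d i + Gyu i *m blk u i,
      v = L *m w &
      forall i, blk u i = Khat i *m Rmx i *m col_mx (blk y i) (blk v i)].

Definition net_well_posed : Prop :=
  forall d, (exists v w u y z, net_eqs d v w u y z) /\
    (forall v w u y z v' w' u' y' z',
       net_eqs d v w u y z -> net_eqs d v' w' u' y' z' ->
       [/\ v = v', w = w', u = u', y = y' & z = z']).

Definition is_Tzd (T : 'M[TF]_(\sum_i nz i, \sum_i nd i)) : Prop :=
  forall d v w u y z, net_eqs d v w u y z -> z = T *m d.

Definition Mhat_zd i : 'M[TF]_(nz i, nd i) :=
  Gzd i + Gzu i *m Khat i *m invmx (1%:M - Gyu i *m Khat i) *m Gyd i.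
Definition Mhat_wd i : 'M[TF]_(nw i, nd i) :=
  Gwd i + Gwu i *m Khat i *m invmx (1%:M - Gyu i *m Khat i) *m Gyd i.

End Network.
End TF.

(* Each subcontroller feeds Khat_i the "residual" e_i = y_i - G_{y_i v_i} v_i,
   which removes the interaction input from the measurement.  Hence
   (1) locally, e_i = G_{y_i d_i} d_i + G_{y_i u_i} u_i and u_i = Khat_i e_i, so
       that u_i = Khat_i (I - G_{y_i u_i} Khat_i)^-1 G_{y_i d_i} d_i whenever the
       local loop is well posed; plugging this into the w- and z-equations gives
       w = diag(G_wv) v + diag(Mhat_wd) d  and  z = diag(G_zv) v + diag(Mhat_zd) d;
   (2) globally, v = L w then yields v = (I - L diag(G_wv))^-1 L diag(Mhat_wd) d.
   The invertibility of I - G_{y_i u_i} Khat_i and of I - L diag(G_wv) both come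
   from the internal stability hypotheses, via the factorisation of the loop
   matrix [I -K; -P I] into triangular blocks. *)
From HB Require Import structures.
From mathcomp Require Import all_boot all_order all_algebra.
Set Implicit Arguments. Unset Strict Implicit. Unset Printing Implicit Defensive.
Import Order.TTheory GRing.Theory Num.Theory.
Local Open Scope ring_scope.

Section FeedbackAlgebra.
Variable R : comUnitRingType.

(* The loop matrix of  y = P u, u = K y  factors as
   [I -K; 0 I] * [I - K P, 0; -P, I], so its invertibility forces that of
   I - K P: this is well-posedness of the loop seen from the u-side. *)
Lemma loop_unit_KP m p (P : 'M[R]_(p, m)) (K : 'M[R]_(m, p)) :
  block_mx 1%:M (- K) (- P) 1%:M \in unitmx -> (1%:M - K *m P) \in unitmx.
Proof.
have factor : block_mx 1%:M (- K) (- P) 1%:M =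
    block_mx 1%:M (- K) 0 1%:M *m block_mx (1%:M - K *m P) 0 (- P) 1%:M.
  rewrite mulmx_block ?mul1mx ?mulmx1 ?mul0mx ?mulmx0 ?add0r ?addr0.
  by rewrite mulmxN mulNmx opprK subrK.
by rewrite factor !unitmxE det_mulmx det_ublock det_lblock !det1 ?mul1r ?mulr1.
Qed.

(* Symmetrically, [I -K; -P I] = [I 0; -P I] * [I, -K; 0, I - P K], so the
   loop is also well posed from the y-side: I - P K is invertible. *)
Lemma loop_unit_PK m p (P : 'M[R]_(p, m)) (K : 'M[R]_(m, p)) :
  block_mx 1%:M (- K) (- P) 1%:M \in unitmx -> (1%:M - P *m K) \in unitmx.
Proof.
have factor : block_mx 1%:M (- K) (- P) 1%:M =
    block_mx 1%:M 0 (- P) 1%:M *m block_mx 1%:M (- K) 0 (1%:M - P *m K).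
  rewrite mulmx_block ?mul1mx ?mulmx1 ?mul0mx ?mulmx0 ?add0r ?addr0.
  by rewrite mulmxN mulNmx opprK addrC subrK.
by rewrite factor !unitmxE det_mulmx det_ublock det_lblock !det1 ?mul1r ?mulr1.
Qed.

(* Local loop of one subsystem: the controller u = K (y - Gv v) sees the
   measurement y = Gv v + Gd d + Gu u with the interaction term cancelled, so
   u is determined by d alone: u = K (I - Gu K)^-1 Gd d. *)
Lemma residual_feedback_solution ny nv nd nu k
    (Gv : 'M[R]_(ny, nv)) (Gd : 'M[R]_(ny, nd)) (Gu : 'M[R]_(ny, nu))
    (K : 'M[R]_(nu, ny)) (v : 'M[R]_(nv, k)) (d : 'M[R]_(nd, k))
    (u : 'M[R]_(nu, k)) (y : 'M[R]_(ny, k)) :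
  (1%:M - Gu *m K) \in unitmx ->
  y = Gv *m v + Gd *m d + Gu *m u ->
  u = K *m (y - Gv *m v) ->
  u = K *m invmx (1%:M - Gu *m K) *m Gd *m d.
Proof.
move=> unitGK hy hu.
have residual_eq : (1%:M - Gu *m K) *m (y - Gv *m v) = Gd *m d.
  by rewrite mulmxBl mul1mx -mulmxA -hu {1}hy addrAC addrK addrC addKr.
by rewrite hu -!mulmxA -residual_eq mulKmx.
Qed.

Lemma interaction_solution n m k (L : 'M[R]_(n, m)) (A : 'M[R]_(m, n))
    (v : 'M[R]_(n, k)) (w b : 'M[R]_(m, k)) :
  (1%:M - L *m A) \in unitmx -> v = L *m w -> w = A *m v + b ->
  v = invmx (1%:M - L *m A) *m (L *m b).
Proof.
move=> unitLA hv hw.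
have loop_eq : (1%:M - L *m A) *m v = L *m b.
  by rewrite mulmxBl mul1mx {1}hv hw mulmxDr mulmxA addrAC subrr add0r.
by rewrite -loop_eq mulKmx.
Qed.

End FeedbackAlgebra.

Section StackedSignals.
Variable C : numClosedFieldType.
Local Notation TF := {fraction {poly C}}.

Lemma blk_bdiag N (p q : 'I_N -> nat) (B : forall i, 'M[TF]_(p i, q i))
    (x : 'cV[TF]_(\sum_i q i)) i :
  blk (bdiag B *m x) i = B i *m blk x i.
Proof.
rewrite /blk -submxcol_mul /bdiag submxcol_matrix -[x in _ *m x]submxcolK.
rewrite mul_mxrow_mxcol (bigD1 i) //= eqxx conform_mx_id big1 ?addr0 //.
by move=> j /negbTE; rewrite eq_sym => ->; rewrite mul0mx.
Qed.

Lemma stack_blockwise N (px pv pd : 'I_N -> nat)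
    (A : forall i, 'M[TF]_(px i, pv i)) (B : forall i, 'M[TF]_(px i, pd i))
    (x : 'cV[TF]_(\sum_i px i)) (v : 'cV[TF]_(\sum_i pv i))
    (d : 'cV[TF]_(\sum_i pd i)) :
  (forall i, blk x i = A i *m blk v i + B i *m blk d i) ->
  x = bdiag A *m v + bdiag B *m d.
Proof.
by move=> hx; apply/mxcolP => i; rewrite submxcolD -!/(blk _ _) !blk_bdiag hx.
Qed.

End StackedSignals.

Theorem proposition3 (C : numClosedFieldType) (N : nat)
  (nv nd nu nw nz ny : 'I_N -> nat)
  (Gwv : forall i, 'M[{fraction {poly C}}]_(nw i, nv i))
  (Gwd : forall i, 'M[{fraction {poly C}}]_(nw i, nd i))
  (Gwu : forall i, 'M[{fraction {poly C}}]_(nw i, nu i))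
  (Gzv : forall i, 'M[{fraction {poly C}}]_(nz i, nv i))
  (Gzd : forall i, 'M[{fraction {poly C}}]_(nz i, nd i))
  (Gzu : forall i, 'M[{fraction {poly C}}]_(nz i, nu i))
  (Gyv : forall i, 'M[{fraction {poly C}}]_(ny i, nv i))
  (Gyd : forall i, 'M[{fraction {poly C}}]_(ny i, nd i))
  (Gyu : forall i, 'M[{fraction {poly C}}]_(ny i, nu i))
  (Khat : forall i, 'M[{fraction {poly C}}]_(nu i, ny i))
  (hGw : forall i, [/\ prr_mx (Gwv i), prr_mx (Gwd i) & prr_mx (Gwu i)])
  (hGz : forall i, [/\ prr_mx (Gzv i), prr_mx (Gzd i) & prr_mx (Gzu i)])
  (hGy : forall i, [/\ prr_mx (Gyv i), prr_mx (Gyd i) & prr_mx (Gyu i)])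
  (hK : forall i, prr_mx (Khat i) /\ int_stable (Gyu i) (Khat i)) :
  forall L : 'M[{fraction {poly C}}]_(\sum_i nv i, \sum_i nw i),
    prr_mx L ->
    int_stable (bdiag Gwv) L ->
    net_well_posed Gwv Gwd Gwu Gzv Gzd Gzu Gyv Gyd Gyu L Khat ->
    is_Tzd Gwv Gwd Gwu Gzv Gzd Gzu Gyv Gyd Gyu L Khat
      (bdiag (Mhat_zd Gzd Gzu Gyd Gyu Khat)
       + bdiag Gzv *m invmx (1%:M - L *m bdiag Gwv) *m L
         *m bdiag (Mhat_wd Gwd Gwu Gyd Gyu Khat)).
Proof.
move=> L _ [loop_unit _] _ d v w u y z [hw hz hy hv hu].
have local_u i : blk u i =
    Khat i *m invmx (1%:M - Gyu i *m Khat i) *m Gyd i *m blk d i.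
  have [_ [/loop_unit_PK unitGK _]] := hK i.
  apply: residual_feedback_solution unitGK (hy i) _.
  by rewrite hu -mulmxA /Rmx mul_row_col mul1mx mulNmx.
have stacked_w : w = bdiag Gwv *m v + bdiag (Mhat_wd Gwd Gwu Gyd Gyu Khat) *m d.
  apply: stack_blockwise => i.
  by rewrite hw local_u /Mhat_wd -addrA mulmxDl !mulmxA.
have stacked_z : z = bdiag Gzv *m v + bdiag (Mhat_zd Gzd Gzu Gyd Gyu Khat) *m d.
  apply: stack_blockwise => i.
  by rewrite hz local_u /Mhat_zd -addrA mulmxDl !mulmxA.
rewrite stacked_z (interaction_solution (loop_unit_KP loop_unit) hv stacked_w).
by rewrite mulmxDl addrC !mulmxA.
Qed.
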